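(* Let $\alpha=a+b\sqrt{D}\in\mathbb{R}$ with $a,b\in\mathbb{Q}$, $b\neq 0$, and $D\ge 2$ a squarefree integer, and let $K=\mathbb{Q}(\alpha)$. Then \[\mathcal{A}_1(\alpha)=\left\{\pm 2b\sqrt{D}\,\mathrm{N}(s) : s\in\Lambda^*\setminus\{0\}\right\},\] where $\Lambda^*$ is the lattice in $K$ dual to $\Lambda=\mathbb{Z}+\alpha\mathbb{Z}$ with respect to the trace form.
   Context: For $\alpha\in\mathbb{R}$, $\mathcal{A}_1(\alpha)$ denotes the set of accumulation points in $\mathbb{R}$ of $\{|q|(q\alpha-p):q\in\mathbb{Z}\setminus\{0\},\ p\in\mathbb{Z}\}$. $\mathrm{N}$ and $\mathrm{Tr}$ are the norm and trace maps from $K$ to $\mathbb{Q}$. The trace form on $K$ is $\langle x,y\rangle=\mathrm{Tr}(xy)$. For the lattice $\Lambda=\mathbb{Z}+\alpha\mathbb{Z}$, its dual lattice with respect to the trace form is $\Lambda^*=\{x\in K:\mathrm{Tr}(xy)\in\mathbb{Z}\text{ for all }y\in\Lambda\}$, equivalently $\Lambda^*=\alpha_0^*\mathbb{Z}+\alpha_1^*\mathbb{Z}$ where $\{\alpha_0^*,\alpha_1^*\}\subset K$ is the basis with $\mathrm{Tr}(\alpha_i\alpha_j^* )=\delta_{ij}$ for $\alpha_0=1,\alpha_1=\alpha$. *)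

From Stdlib Require Export Reals QArith ZArith Qreals.
Open Scope R_scope.

Definition squarefree (D : Z) : Prop :=
  forall k : Z, (k * k | D)%Z -> Z.abs k = 1%Z.

Definition A1_set (alpha : R) (x : R) : Prop :=
  exists q p : Z, q <> 0%Z /\ x = IZR (Z.abs q) * (IZR q * alpha - IZR p).

Definition accum_point (S : R -> Prop) (x : R) : Prop :=
  forall eps : R, 0 < eps -> exists y, S y /\ y <> x /\ Rabs (y - x) < eps.

Definition A1 (alpha : R) (x : R) : Prop := accum_point (A1_set alpha) x.

(* Elements of K = Q(sqrt D) represented as pairs (x, y) meaning x + y sqrt D
   (a Q-basis representation; unique since sqrt D is irrational). *)
Definition Kelt := (Q * Q)%type.

Definition Kmul (D : Z) (u v : Kelt) : Kelt :=
  ((fst u * fst v + inject_Z D * snd u * snd v)%Q,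
   (fst u * snd v + snd u * fst v)%Q).

Definition Kadd (u v : Kelt) : Kelt := ((fst u + fst v)%Q, (snd u + snd v)%Q).

Definition Kof_Z (m : Z) : Kelt := (inject_Z m, 0%Q).

Definition Kscale_Z (m : Z) (u : Kelt) : Kelt :=
  ((inject_Z m * fst u)%Q, (inject_Z m * snd u)%Q).

Definition Ktrace (u : Kelt) : Q := (2 * fst u)%Q.
Definition Knorm (D : Z) (u : Kelt) : Q := (fst u * fst u - inject_Z D * snd u * snd u)%Q.

Definition Kreal (D : Z) (u : Kelt) : R := Q2R (fst u) + Q2R (snd u) * sqrt (IZR D).

Definition Kzero (u : Kelt) : Prop := (fst u == 0)%Q /\ (snd u == 0)%Q.

Definition Q_is_int (r : Q) : Prop := exists z : Z, (r == inject_Z z)%Q.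

Definition in_Lambda (alpha : Kelt) (y : Kelt) : Prop :=
  exists m n : Z, y = Kadd (Kof_Z m) (Kscale_Z n alpha).

Definition in_dual (D : Z) (alpha : Kelt) (s : Kelt) : Prop :=
  forall y : Kelt, in_Lambda alpha y -> Q_is_int (Ktrace (Kmul D s y)).

From Stdlib Require Import Lra Lia Psatz List Classical.
Open Scope R_scope.

(* Let [alpha'] be the conjugate of [alpha], [t = q alpha - p] and [t' = q alpha' - p].
   Since [t - t' = q (alpha - alpha')], the point [|q| t] differs from
   [- sgn q * t t' / (alpha - alpha')] by [t^2 / |alpha - alpha'|].  The norms [t t'] lie in
   the discrete set [Z / C^2] ([C] a common denominator of [a] and [b]); near an
   accumulation point [|t|] is bounded below, hence [q] and [p] range over a finite set, so
   the accumulation point is one of the values [+- t t' / (alpha - alpha')].  Conversely, a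
   unit [eps] of norm 1 with [|eps| < 1] stabilising [Z + alpha Z] (from Pell's equation,
   proved via Dirichlet approximation and pigeonhole) shrinks [t] without changing [t t'],
   and replacing [(q, p)] by [(-q, -p)] selects the sign.  Finally [s |-> (Tr s, Tr (s alpha))]
   maps the dual lattice onto [Z^2] with [t t' / (alpha - alpha') = - (alpha - alpha') N(s)]. *)

Lemma pigeonhole {T : Type} (g : nat -> T) (L : list T) (n : nat) :
  (length L <= n)%nat -> (forall i, (i <= n)%nat -> In (g i) L) ->
  exists i j, (i < j <= n)%nat /\ g i = g j.
Proof.
  intros HL Hin. apply NNPP; intro Hno.
  assert (Hnd : NoDup (map g (seq 0 (S n)))).
  { apply NoDup_map_NoDup_ForallPairs; [|apply seq_NoDup].
    intros x y Hx Hy Hxy. apply in_seq in Hx; apply in_seq in Hy.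
    destruct (Nat.lt_total x y) as [H|[H|H]]; auto;
      exfalso; apply Hno; [exists x, y | exists y, x]; split; auto; lia. }
  apply NoDup_incl_length with (l' := L) in Hnd.
  - rewrite length_map, length_seq in Hnd. lia.
  - intros z Hz. apply in_map_iff in Hz. destruct Hz as [i [<- Hi]].
    apply in_seq in Hi. apply Hin. lia.
Qed.

Definition Zrange (K : nat) : list Z :=
  map (fun i => (Z.of_nat i - Z.of_nat K)%Z) (seq 0 (2 * K + 1)).

Lemma in_Zrange K z : (Z.abs z <= Z.of_nat K)%Z -> In z (Zrange K).
Proof.
  intros H. unfold Zrange. apply in_map_iff. exists (Z.to_nat (z + Z.of_nat K)).
  split.
  - rewrite Z2Nat.id; lia.
  - apply in_seq. lia.
Qed.

Lemma list_separation {T : Type} (f : T -> R) (v : R) (l : list T) :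
  exists r, 0 < r /\ forall x, In x l -> f x <> v -> r <= Rabs (f x - v).
Proof.
  induction l as [|x l [r [Hr IH]]].
  - exists 1. split; [lra|]. intros x [].
  - destruct (Req_dec (f x) v) as [E|E].
    + exists r. split; auto. intros y [<-|Hy] Hne; [contradiction|auto].
    + exists (Rmin r (Rabs (f x - v))). split.
      * apply Rmin_pos; auto. apply Rabs_pos_lt. lra.
      * intros y [<-|Hy] Hne.
        -- apply Rmin_r.
        -- eapply Rle_trans; [apply Rmin_l|auto].
Qed.

Lemma box_separation (f : Z -> Z -> R) (v : R) (N : nat) :
  exists r, 0 < r /\ forall q p, (Z.abs q <= Z.of_nat N)%Z -> (Z.abs p <= Z.of_nat N)%Z ->
    f q p <> v -> r <= Rabs (f q p - v).
Proof.
  destruct (list_separation (fun x => f (fst x) (snd x)) v (list_prod (Zrange N) (Zrange N)))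
    as [r [Hr H]].
  exists r. split; auto. intros q p Hq Hp Hne.
  apply (H (q, p)); auto. apply in_prod; apply in_Zrange; auto.
Qed.

Lemma integer_separation (u : R) :
  exists r, 0 < r /\ forall z : Z, IZR z <> u -> r <= Rabs (IZR z - u).
Proof.
  set (n := Int_part u).
  destruct (base_Int_part u) as [Hn1 Hn2]; fold n in Hn1, Hn2.
  destruct (list_separation IZR u (n :: (n + 1)%Z :: nil)) as [r [Hr H]].
  exists (Rmin r 1). split; [apply Rmin_pos; lra|]. intros z Hz.
  destruct (Z.eq_dec z n) as [->|Hzn]; [eapply Rle_trans; [apply Rmin_l|apply H; simpl; auto]|].
  destruct (Z.eq_dec z (n + 1)) as [->|Hzn1];
    [eapply Rle_trans; [apply Rmin_l|apply H; simpl; auto]|].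
  eapply Rle_trans; [apply Rmin_r|].
  destruct (Z.lt_total z n) as [Hl|[Hl|Hl]]; [|contradiction|].
  - assert (Hl1 : (z + 1 <= n)%Z) by lia. apply IZR_le in Hl1. rewrite plus_IZR in Hl1.
    rewrite Rabs_left1; lra.
  - assert (Hl2 : (n + 2 <= z)%Z) by lia. apply IZR_le in Hl2. rewrite plus_IZR in Hl2.
    rewrite Rabs_right; lra.
Qed.

Lemma lattice_separation (k v : R) : k <> 0 ->
  exists r, 0 < r /\ forall z : Z, IZR z * k <> v -> r <= Rabs (IZR z * k - v).
Proof.
  intros Hk. destruct (integer_separation (v / k)) as [r [Hr H]].
  exists (r * Rabs k). split; [apply Rmult_lt_0_compat; [lra|apply Rabs_pos_lt; auto]|].
  intros z Hz.
  replace (IZR z * k - v) with ((IZR z - v / k) * k) by (field; auto).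
  rewrite Rabs_mult. apply Rmult_le_compat_r; [apply Rabs_pos|].
  apply H. intro E. apply Hz. rewrite E. field. auto.
Qed.

(** * Pell's equation *)

Definition nonsquare (M : Z) : Prop := forall k L : Z, (k * k = M * L * L)%Z -> L = 0%Z.

Lemma squarefree_nonsquare (D : Z) : (2 <= D)%Z -> squarefree D -> nonsquare D.
Proof.
  intros HD Hsf k L E. destruct (Z.eq_dec L 0) as [|HL]; auto. exfalso.
  set (g := Z.gcd k L).
  assert (Hg : (0 < g)%Z).
  { pose proof (Z.gcd_nonneg k L). enough (g <> 0%Z) by (unfold g in *; lia).
    unfold g. intro H0. apply Z.gcd_eq_0 in H0. lia. }
  destruct (Z.gcd_divide_l k L) as [k' Hk]. destruct (Z.gcd_divide_r k L) as [L' HL'].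
  fold g in Hk, HL'.
  assert (Hc : Z.gcd k' L' = 1%Z).
  { pose proof (Z.gcd_div_gcd k L g ltac:(lia) eq_refl) as H.
    rewrite Hk, HL', !Z.div_mul in H by lia. exact H. }
  clearbody g.
  assert (E' : (k' * k' = D * L' * L')%Z).
  { subst k L. apply Z.mul_reg_l with (g * g)%Z; [nia|]. nia. }
  assert (HL1 : (L' | k' * k')%Z) by (exists (D * L')%Z; lia).
  apply Z.gauss in HL1; [| rewrite Z.gcd_comm; exact Hc].
  assert (HL2 : (L' | 1)%Z) by (rewrite <- Hc; apply Z.gcd_greatest; auto; apply Z.divide_refl).
  apply Z.divide_1_r in HL2.
  assert (Ed : D = (k' * k')%Z) by (destruct HL2; subst; lia).
  assert (Hk1 : Z.abs k' = 1%Z) by (apply Hsf; rewrite Ed; apply Z.divide_refl).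
  nia.
Qed.

Lemma dirichlet_approximation (theta : R) (N : nat) : (1 <= N)%nat ->
  exists x y : Z, (1 <= y <= Z.of_nat N)%Z /\ Rabs (IZR y * theta - IZR x) < / INR N.
Proof.
  intros HN.
  assert (HNr : 1 <= INR N) by (apply (le_INR 1); auto).
  set (fr := fun k : nat => frac_part (INR k * theta)).
  assert (Hfr : forall k, 0 <= fr k < 1) by (intro k; unfold fr; pose proof (base_fp (INR k * theta)); lra).
  set (box := fun k : nat => Int_part (INR N * fr k)).
  assert (Hbox : forall k, IZR (box k) <= INR N * fr k < IZR (box k) + 1).
  { intro k. unfold box. destruct (base_Int_part (INR N * fr k)). lra. }
  destruct (pigeonhole box (map Z.of_nat (seq 0 N)) N) as [i [j [Hij Hb]]].
  - rewrite length_map, length_seq. lia.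
  - intros i _. apply in_map_iff. exists (Z.to_nat (box i)).
    pose proof (Hbox i) as [H1 H2]. pose proof (Hfr i).
    assert (Hlo : (-1 < box i)%Z) by (apply lt_IZR; nra).
    assert (Hhi : (box i < Z.of_nat N)%Z) by (apply lt_IZR; rewrite <- INR_IZR_INZ; nra).
    split; [lia|]. apply in_seq. lia.
  - exists (Int_part (INR j * theta) - Int_part (INR i * theta))%Z, (Z.of_nat j - Z.of_nat i)%Z.
    split; [lia|].
    rewrite !minus_IZR, <- !INR_IZR_INZ.
    replace ((INR j - INR i) * theta - (IZR (Int_part (INR j * theta)) - IZR (Int_part (INR i * theta))))
      with (fr j - fr i) by (unfold fr, frac_part; ring).
    pose proof (Hbox i). pose proof (Hbox j). rewrite Hb in *.
    apply Rabs_def1; apply Rmult_lt_reg_l with (INR N); try lra;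
      rewrite ?Rmult_plus_distr_l, ?Rmult_minus_distr_l, ?Ropp_mult_distr_r_reverse, Rinv_r; lra.
Qed.

Definition pell_norm (M : Z) (xy : Z * Z) : Z := (fst xy * fst xy - M * snd xy * snd xy)%Z.
Definition pell_error (M : Z) (xy : Z * Z) : R := IZR (snd xy) * sqrt (IZR M) - IZR (fst xy).

Definition good_approx (M : Z) (xy : Z * Z) : Prop :=
  (1 <= snd xy)%Z /\ pell_norm M xy <> 0%Z /\ (Z.abs (pell_norm M xy) <= 2 * M)%Z.

Lemma pell_norm_error (M : Z) (xy : Z * Z) : (0 <= M)%Z ->
  IZR (pell_norm M xy) =
  - pell_error M xy * (2 * IZR (snd xy) * sqrt (IZR M) - pell_error M xy).
Proof.
  intros HM. unfold pell_norm, pell_error. rewrite minus_IZR, !mult_IZR.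
  replace (IZR M) with (sqrt (IZR M) * sqrt (IZR M)) at 1
    by (apply sqrt_sqrt, IZR_le; auto).
  ring.
Qed.

Lemma pell_error_neq0 (M : Z) (xy : Z * Z) : (0 <= M)%Z ->
  pell_norm M xy <> 0%Z -> pell_error M xy <> 0.
Proof.
  intros HM Hn E. apply Hn, eq_IZR. rewrite pell_norm_error, E by auto. ring.
Qed.

Lemma pell_approximation (M : Z) : (1 <= M)%Z -> nonsquare M ->
  forall r, 0 < r -> exists xy, good_approx M xy /\ Rabs (pell_error M xy) < r.
Proof.
  intros HM HnsM r Hr.
  destruct (archimed (/ r)) as [Hup _].
  assert (Hup0 : (0 < up (/ r))%Z) by (apply lt_IZR; pose proof (Rinv_0_lt_compat r Hr); lra).
  set (N := Z.to_nat (up (/ r))).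
  assert (HN : INR N = IZR (up (/ r))) by (unfold N; rewrite INR_IZR_INZ, Z2Nat.id by lia; auto).
  destruct (dirichlet_approximation (sqrt (IZR M)) N ltac:(lia)) as [x [y [Hy He]]].
  assert (HNr : 1 <= INR N) by (apply (le_INR 1); lia).
  assert (HNinv : / INR N < r).
  { rewrite <- (Rinv_inv r). apply Rinv_lt_contravar; [|lra].
    apply Rmult_lt_0_compat; [apply Rinv_0_lt_compat|]; lra. }
  assert (Hnz : pell_norm M (x, y) <> 0%Z).
  { unfold pell_norm; simpl. intro E. assert (y = 0%Z) by (apply HnsM with x; lia). lia. }
  exists (x, y). split; [|unfold pell_error; simpl; lra].
  split; [simpl; lia|]. split; [auto|].
  set (sM := sqrt (IZR M)).
  assert (HMr : 1 <= IZR M) by (apply IZR_le; auto).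
  assert (HsM : sM * sM = IZR M) by (apply sqrt_sqrt; lra).
  assert (HsM0 : 0 <= sM) by apply sqrt_pos.
  assert (HsMM : sM <= IZR M) by nra.
  assert (HyN : 1 <= IZR y <= INR N) by (rewrite INR_IZR_INZ; split; apply IZR_le; lia).
  set (e := pell_error M (x, y)).
  assert (Hen : Rabs e * INR N < 1).
  { apply Rmult_lt_reg_r with (/ INR N); [apply Rinv_0_lt_compat; lra|].
    rewrite Rmult_assoc, Rinv_r, Rmult_1_r, Rmult_1_l by lra. exact He. }
  assert (Hbound : Rabs (IZR (pell_norm M (x, y))) < IZR (2 * M + 1)).
  { rewrite plus_IZR, mult_IZR, pell_norm_error by lia. fold e sM. simpl.
    rewrite Rabs_mult, Rabs_Ropp.
    assert (Rabs (2 * IZR y * sM - e) <= 2 * IZR y * sM + Rabs e).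
    { unfold Rminus. eapply Rle_trans; [apply Rabs_triang|]. rewrite Rabs_Ropp.
      rewrite Rabs_right; [lra|]. apply Rle_ge. nra. }
    assert (Hea : Rabs e < 1) by nra.
    pose proof (Rabs_pos e).
    assert (Rabs e * IZR y <= Rabs e * INR N) by (apply Rmult_le_compat_l; lra).
    apply Rle_lt_trans with (Rabs e * (2 * IZR y * sM + Rabs e)); [apply Rmult_le_compat_l; lra|].
    nra. }
  rewrite <- abs_IZR in Hbound. apply lt_IZR in Hbound. lia.
Qed.

Lemma pell_approximations (M : Z) : (1 <= M)%Z -> nonsquare M ->
  forall n : nat, exists f : nat -> Z * Z, (forall i, (i <= n)%nat -> good_approx M (f i)) /\
    (forall i j, (i < j <= n)%nat -> Rabs (pell_error M (f j)) < Rabs (pell_error M (f i))).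
Proof.
  intros HM HnsM. induction n as [|n [f [Hg Hd]]].
  - destruct (pell_approximation M HM HnsM 1 ltac:(lra)) as [xy [Hxy _]].
    exists (fun _ => xy). split; auto. intros; lia.
  - assert (Hpos : 0 < Rabs (pell_error M (f n))).
    { apply Rabs_pos_lt, pell_error_neq0; [lia|]. apply (Hg n (le_n n)). }
    destruct (pell_approximation M HM HnsM _ Hpos) as [xy [Hxy Hlt]].
    exists (fun i => if Nat.eqb i (S n) then xy else f i). split.
    + intros i Hi. destruct (Nat.eqb_spec i (S n)); auto. apply Hg. lia.
    + intros i j Hij.
      destruct (Nat.eqb_spec j (S n)); destruct (Nat.eqb_spec i (S n)); try lia.
      * destruct (Nat.eq_dec i n) as [->|Hin]; auto.
        eapply Rlt_trans; [exact Hlt|]. apply Hd. lia.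
      * apply Hd. lia.
Qed.

Section PellEquation.
Local Open Scope Z_scope.

Lemma mod_abs_eq_exists (a b n : Z) : n <> 0 -> a mod Z.abs n = b mod Z.abs n ->
  exists k, b = a + n * k.
Proof.
  intros Hn E.
  assert (H : (Z.abs n | b - a)).
  { apply Z.mod_divide; [lia|]. rewrite Zminus_mod, E, Z.sub_diag. apply Z.mod_0_l. lia. }
  destruct H as [k Hk]. destruct (Z.abs_spec n) as [[_ E']|[_ E']]; rewrite E' in Hk;
    [exists k | exists (- k)]; lia.
Qed.

(* If [x1 + y1 sqrt M] and [x2 + y2 sqrt M] have the same norm [n] and are congruent
   modulo [n], their quotient [(x1 x2 - M y1 y2 + (x1 y2 - x2 y1) sqrt M) / n]
   is an algebraic integer of norm 1. *)
Lemma pell_of_congruent (M x1 y1 x2 y2 : Z) :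
  let n := pell_norm M (x1, y1) in
  pell_norm M (x2, y2) = n -> n <> 0 ->
  x1 mod Z.abs n = x2 mod Z.abs n -> y1 mod Z.abs n = y2 mod Z.abs n ->
  1 <= y1 -> 1 <= y2 -> (x1, y1) <> (x2, y2) ->
  exists X Y, X * X - M * Y * Y = 1 /\ Y <> 0.
Proof.
  intros n En Hn Hx Hy Hy1 Hy2 Hne. unfold pell_norm in n, En; cbn [fst snd] in n, En.
  destruct (mod_abs_eq_exists x1 x2 n Hn Hx) as [k1 Ek1].
  destruct (mod_abs_eq_exists y1 y2 n Hn Hy) as [k2 Ek2].
  exists (1 + x1 * k1 - M * y1 * k2), (x1 * k2 - k1 * y1).
  assert (Hnn : n * n <> 0) by nia.
  split.
  - apply Z.mul_reg_l with (n * n); [exact Hnn|].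
    transitivity (n * (x2 * x2 - M * y2 * y2)); [rewrite Ek1, Ek2; unfold n; ring|].
    rewrite En. ring.
  - intro HY.
    assert (Hc : x1 * y2 = x2 * y1).
    { assert (E : x1 * y2 - x2 * y1 = n * (x1 * k2 - k1 * y1)) by (rewrite Ek1, Ek2; ring).
      rewrite HY in E. lia. }
    clear Ek1 Ek2.
    assert (Hyy : n * (y2 * y2) = n * (y1 * y1)).
    { transitivity ((x1 * y2) * (x1 * y2) - M * y1 * y1 * y2 * y2); [unfold n; ring|].
      rewrite Hc. transitivity ((x2 * x2 - M * y2 * y2) * (y1 * y1)); [ring|].
      rewrite En. unfold n. ring. }
    apply Z.mul_reg_l in Hyy; [|auto].
    assert (y1 = y2) by nia. subst y2.
    assert (x1 = x2) by (apply Z.mul_reg_r with y1; [lia|exact Hc]). subst. auto.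
Qed.

Theorem pell (M : Z) : 1 <= M -> nonsquare M -> exists X Y, X * X - M * Y * Y = 1 /\ Y <> 0.
Proof.
  intros HM HnsM.
  set (K := Z.to_nat (2 * M)).
  set (L := list_prod (list_prod (Zrange K) (Zrange K)) (Zrange K)).
  destruct (pell_approximations M HM HnsM (length L)) as [f [Hg Hd]].
  set (cls := fun i => let n := pell_norm M (f i) in
                      ((n, fst (f i) mod Z.abs n), snd (f i) mod Z.abs n)).
  destruct (pigeonhole cls L (length L)) as [i [j [Hij Hc]]]; [lia| |].
  - intros i Hi. destruct (Hg i Hi) as [Hy [Hn Hb]].
    unfold cls. cbv zeta.
    assert (Hp : 0 < Z.abs (pell_norm M (f i))) by lia.
    pose proof (Z.mod_pos_bound (fst (f i)) _ Hp).
    pose proof (Z.mod_pos_bound (snd (f i)) _ Hp).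
    unfold L. apply in_prod; [apply in_prod|]; apply in_Zrange; unfold K;
      rewrite Z2Nat.id by lia; rewrite ?Z.abs_eq by lia; lia.
  - destruct (Hg i ltac:(lia)) as [Hyi [Hni _]].
    destruct (Hg j ltac:(lia)) as [Hyj _].
    pose proof (Hd i j Hij) as Hlt.
    unfold cls in Hc. cbv zeta in Hc. injection Hc as E1 E2 E3.
    destruct (f i) as [x1 y1]. destruct (f j) as [x2 y2]. cbn [fst snd] in *.
    apply (pell_of_congruent M x1 y1 x2 y2); auto.
    + rewrite E2, E1. auto.
    + rewrite E3, E1. auto.
    + intro Heq. rewrite Heq in Hlt. exact (Rlt_irrefl _ Hlt).
Qed.

End PellEquation.

(** * Accumulation points of [|q| (q alpha - p)] *)

Definition lin (alpha : R) (q p : Z) : R := IZR q * alpha - IZR p.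

Definition lin_norm (alpha alpha' : R) (q p : Z) : R := lin alpha q p * lin alpha' q p.

Lemma lin_opp (alpha : R) (q p : Z) : lin alpha (- q) (- p) = - lin alpha q p.
Proof. unfold lin. rewrite !opp_IZR. ring. Qed.

Lemma lin_norm_opp (alpha alpha' : R) (q p : Z) :
  lin_norm alpha alpha' (- q) (- p) = lin_norm alpha alpha' q p.
Proof. unfold lin_norm. rewrite !lin_opp. ring. Qed.

Lemma lin_neq0_small (alpha : R) (q p : Z) :
  lin alpha q p <> 0 -> Rabs (lin alpha q p) < 1 -> q <> 0%Z.
Proof.
  intros Ht Hlt ->. unfold lin in *. rewrite Rmult_0_l, Rminus_0_l, Rabs_Ropp in Hlt.
  rewrite <- abs_IZR in Hlt. apply lt_IZR in Hlt.
  apply Ht. replace p with 0%Z by lia. ring.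
Qed.

Lemma abs_mul_lin_dist (alpha alpha' : R) (q p : Z) : alpha <> alpha' -> q <> 0%Z ->
  Rabs (IZR (Z.abs q) * lin alpha q p
        - - (IZR (Z.sgn q) * lin_norm alpha alpha' q p / (alpha - alpha')))
  = lin alpha q p ^ 2 / Rabs (alpha - alpha').
Proof.
  intros Ha Hq.
  assert (Hd : alpha - alpha' <> 0) by lra.
  assert (Hsg : IZR (Z.sgn q) = 1 \/ IZR (Z.sgn q) = -1).
  { destruct (Z.lt_total q 0) as [H|[H|H]]; [right|contradiction|left];
      [rewrite Z.sgn_neg | rewrite Z.sgn_pos]; auto. }
  replace (IZR (Z.abs q) * lin alpha q p
           - - (IZR (Z.sgn q) * lin_norm alpha alpha' q p / (alpha - alpha')))
    with (IZR (Z.sgn q) * (lin alpha q p ^ 2 / (alpha - alpha'))).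
  - unfold Rdiv. rewrite !Rabs_mult, Rabs_inv, <- RPow_abs, pow2_abs.
    replace (Rabs (IZR (Z.sgn q))) with 1; [ring|].
    destruct Hsg as [-> | ->]; unfold Rabs; destruct Rcase_abs; lra.
  - rewrite <- Z.sgn_abs, mult_IZR. unfold lin_norm, lin.
    field; auto.
Qed.

Lemma abs_ge_of_sqr_ge (t m : R) : m <= t * t -> Rmin 1 m <= Rabs t.
Proof.
  intros H. destruct (Rlt_or_le (Rabs t) 1) as [Ht|Ht].
  - eapply Rle_trans; [apply Rmin_r|].
    rewrite <- (Rabs_right (t * t)) in H by (apply Rle_ge, Rle_0_sqr).
    rewrite Rabs_mult in H. pose proof (Rabs_pos t). nra.
  - eapply Rle_trans; [apply Rmin_l|exact Ht].
Qed.

Lemma lin_abs_lower_bound (alpha alpha' v r : R) (q p : Z) : alpha <> alpha' -> q <> 0%Z ->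
  r <= Rabs (- (IZR (Z.sgn q) * lin_norm alpha alpha' q p / (alpha - alpha')) - v) ->
  Rabs (IZR (Z.abs q) * lin alpha q p - v) <= r / 2 ->
  Rmin 1 (r / 2 * Rabs (alpha - alpha')) <= Rabs (lin alpha q p).
Proof.
  intros Ha Hq Hw Hy.
  assert (Hd : 0 < Rabs (alpha - alpha')) by (apply Rabs_pos_lt; lra).
  pose proof (abs_mul_lin_dist alpha alpha' q p Ha Hq) as Hdist.
  set (t := lin alpha q p) in *.
  set (w := - (IZR (Z.sgn q) * lin_norm alpha alpha' q p / (alpha - alpha'))) in *.
  assert (Hfar : r / 2 <= t ^ 2 / Rabs (alpha - alpha')).
  { rewrite <- Hdist.
    pose proof (Rabs_triang_inv (w - v) (IZR (Z.abs q) * t - v)) as H.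
    replace (w - v - (IZR (Z.abs q) * t - v)) with (- (IZR (Z.abs q) * t - w)) in H by ring.
    rewrite Rabs_Ropp in H. lra. }
  apply abs_ge_of_sqr_ge.
  apply Rmult_le_reg_r with (/ Rabs (alpha - alpha')); [apply Rinv_0_lt_compat; lra|].
  rewrite Rmult_assoc, Rinv_r by lra. unfold Rdiv in Hfar. lra.
Qed.

Lemma lin_pairs_bounded (alpha alpha' v r : R) : alpha <> alpha' -> 0 < r ->
  exists N : nat, forall q p, q <> 0%Z ->
    r <= Rabs (- (IZR (Z.sgn q) * lin_norm alpha alpha' q p / (alpha - alpha')) - v) ->
    Rabs (IZR (Z.abs q) * lin alpha q p - v) < Rmin 1 (r / 2) ->
    (Z.abs q <= Z.of_nat N)%Z /\ (Z.abs p <= Z.of_nat N)%Z.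
Proof.
  intros Ha Hr.
  assert (Hd : 0 < Rabs (alpha - alpha')) by (apply Rabs_pos_lt; lra).
  set (c := Rmin 1 (r / 2 * Rabs (alpha - alpha'))).
  assert (Hc : 0 < c) by (apply Rmin_pos; [lra|]; apply Rmult_lt_0_compat; lra).
  set (Q := (Rabs v + 1) / c).
  assert (HQ : 0 <= Q) by (apply Rlt_le, Rdiv_lt_0_compat; [pose proof (Rabs_pos v)|]; lra).
  set (Bd := Q * (1 + Rabs alpha) + Rabs v + 1).
  assert (HQB : Q <= Bd) by (unfold Bd; pose proof (Rabs_pos alpha); pose proof (Rabs_pos v); nra).
  destruct (archimed Bd) as [HBd _].
  exists (Z.to_nat (up Bd)). intros q p Hq Hw Hy.
  assert (HNr : Bd < IZR (Z.of_nat (Z.to_nat (up Bd)))).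
  { rewrite Z2Nat.id; [lra|]. apply le_IZR. lra. }
  assert (Hy1 : Rmin 1 (r / 2) <= 1) by apply Rmin_l.
  assert (Hy2 : Rmin 1 (r / 2) <= r / 2) by apply Rmin_r.
  assert (Ht : c <= Rabs (lin alpha q p))
    by (apply (lin_abs_lower_bound alpha alpha' v r q p Ha Hq Hw); lra).
  set (t := lin alpha q p) in *.
  assert (Hq1 : 1 <= IZR (Z.abs q)) by (apply IZR_le; lia).
  assert (Hyv : IZR (Z.abs q) * Rabs t <= Rabs v + 1).
  { rewrite <- (Rabs_right (IZR (Z.abs q))), <- Rabs_mult by lra.
    pose proof (Rabs_triang_inv (IZR (Z.abs q) * t) v). lra. }
  assert (HqQ : IZR (Z.abs q) <= Q).
  { unfold Q. apply Rmult_le_reg_r with c; [lra|]. unfold Rdiv.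
    rewrite Rmult_assoc, Rinv_l, Rmult_1_r by lra. nra. }
  assert (Hp : Rabs (IZR p) <= Bd).
  { replace (IZR p) with (IZR q * alpha - t) by (unfold t, lin; ring).
    unfold Rminus. eapply Rle_trans; [apply Rabs_triang|].
    rewrite Rabs_Ropp, Rabs_mult, <- abs_IZR. unfold Bd.
    pose proof (Rabs_pos alpha). nra. }
  rewrite <- abs_IZR in Hp.
  split; apply le_IZR; lra.
Qed.

Lemma A1_norm_value (alpha alpha' c v : R) : alpha <> alpha' -> 0 < c ->
  (forall q p, exists z : Z, lin_norm alpha alpha' q p = IZR z * c) ->
  A1 alpha v ->
  exists q p, q <> 0%Z /\ v = - (IZR (Z.sgn q) * lin_norm alpha alpha' q p / (alpha - alpha')).
Proof.
  intros Ha Hc Hdiscr HA.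
  assert (Hd : alpha - alpha' <> 0) by lra.
  destruct (lattice_separation (c / (alpha - alpha')) v) as [r [Hr Hsep]].
  { unfold Rdiv. apply Rmult_integral_contrapositive. split; [lra|]. apply Rinv_neq_0_compat; auto. }
  destruct (lin_pairs_bounded alpha alpha' v r Ha Hr) as [N HN].
  destruct (box_separation (fun q p => IZR (Z.abs q) * lin alpha q p) v N) as [r1 [Hr1 Hbox]].
  set (eps := Rmin (Rmin 1 (r / 2)) r1).
  assert (Heps : 0 < eps) by (apply Rmin_pos; [apply Rmin_pos|]; lra).
  destruct (HA eps Heps) as [y [[q [p [Hq ->]]] [Hyv Hyd]]].
  change (IZR q * alpha - IZR p) with (lin alpha q p) in Hyv, Hyd.
  exists q, p. split; [auto|].
  set (w := - (IZR (Z.sgn q) * lin_norm alpha alpha' q p / (alpha - alpha'))).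
  destruct (Req_dec w v) as [E|Hwv]; [auto|exfalso].
  assert (Hw : r <= Rabs (w - v)).
  { destruct (Hdiscr q p) as [z Hz].
    replace w with (IZR (- Z.sgn q * z) * (c / (alpha - alpha'))) in Hwv |- *
      by (unfold w; rewrite Hz, mult_IZR, opp_IZR; field; auto).
    apply Hsep. auto. }
  assert (Hclose : Rabs (IZR (Z.abs q) * lin alpha q p - v) < Rmin 1 (r / 2)).
  { eapply Rlt_le_trans; [exact Hyd|apply Rmin_l]. }
  destruct (HN q p Hq Hw Hclose) as [HqN HpN].
  specialize (Hbox q p HqN HpN Hyv). cbv beta in Hbox.
  assert (eps <= r1) by apply Rmin_r. lra.
Qed.

Lemma A1_of_small_lin (alpha alpha' n0 : R) (sg : Z) : alpha <> alpha' ->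
  (sg = 1 \/ sg = -1)%Z ->
  (forall r, 0 < r -> exists q p,
     lin alpha q p <> 0 /\ Rabs (lin alpha q p) < r /\ lin_norm alpha alpha' q p = n0) ->
  A1 alpha (- (IZR sg * n0 / (alpha - alpha'))).
Proof.
  intros Ha Hsg Hsmall eps Heps.
  assert (Hd : 0 < Rabs (alpha - alpha')) by (apply Rabs_pos_lt; lra).
  destruct (Hsmall (Rmin 1 (eps * Rabs (alpha - alpha')))) as [q0 [p0 [Ht0 [Hr0 HN0]]]].
  { apply Rmin_pos; [lra|]. apply Rmult_lt_0_compat; lra. }
  assert (Hr1 : Rmin 1 (eps * Rabs (alpha - alpha')) <= 1) by apply Rmin_l.
  assert (Hr2 : Rmin 1 (eps * Rabs (alpha - alpha')) <= eps * Rabs (alpha - alpha'))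
    by apply Rmin_r.
  assert (Hq0 : q0 <> 0%Z) by (apply (lin_neq0_small alpha q0 p0); lra).
  assert (Hsign : exists q p, Z.sgn q = sg /\
            Rabs (lin alpha q p) = Rabs (lin alpha q0 p0) /\ lin_norm alpha alpha' q p = n0).
  { destruct (Z.eq_dec (Z.sgn q0) sg) as [E|E]; [exists q0, p0; auto|].
    exists (- q0)%Z, (- p0)%Z. rewrite Z.sgn_opp, lin_opp, lin_norm_opp, Rabs_Ropp.
    repeat split; auto.
    destruct (Z.lt_total q0 0) as [H|[H|H]];
      [rewrite Z.sgn_neg in * | contradiction | rewrite Z.sgn_pos in *]; auto; lia. }
  destruct Hsign as [q [p [<- [Habs HN]]]].
  assert (Hq : q <> 0%Z) by (intros ->; simpl in Hsg; lia).
  pose proof (abs_mul_lin_dist alpha alpha' q p Ha Hq) as Hdist. rewrite HN in Hdist.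
  assert (Ht2 : 0 < lin alpha q p ^ 2 / Rabs (alpha - alpha')).
  { apply Rdiv_lt_0_compat; [|lra]. rewrite <- pow2_abs, Habs.
    apply pow_lt, Rabs_pos_lt; auto. }
  exists (IZR (Z.abs q) * lin alpha q p). split; [|split].
  - exists q, p. auto.
  - intro E. rewrite E, Rminus_diag, Rabs_R0 in Hdist. lra.
  - rewrite Hdist. apply Rmult_lt_reg_r with (Rabs (alpha - alpha')); [lra|].
    unfold Rdiv. rewrite Rmult_assoc, Rinv_l, Rmult_1_r by lra.
    rewrite <- pow2_abs, Habs. pose proof (Rabs_pos (lin alpha q0 p0)). nra.
Qed.

Lemma small_lin_of_unit (alpha alpha' eps eps' : R) (step : Z * Z -> Z * Z) (q0 p0 : Z) :
  (forall x, lin alpha (fst (step x)) (snd (step x)) = eps * lin alpha (fst x) (snd x)) ->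
  (forall x, lin alpha' (fst (step x)) (snd (step x)) = eps' * lin alpha' (fst x) (snd x)) ->
  eps * eps' = 1 -> Rabs eps < 1 -> lin alpha q0 p0 <> 0 ->
  forall r, 0 < r -> exists q p, lin alpha q p <> 0 /\ Rabs (lin alpha q p) < r /\
    lin_norm alpha alpha' q p = lin_norm alpha alpha' q0 p0.
Proof.
  intros Hstep Hstep' Hunit Heps Ht0 r Hr.
  assert (Hiter : forall k, lin alpha (fst (Nat.iter k step (q0, p0))) (snd (Nat.iter k step (q0, p0)))
                          = eps ^ k * lin alpha q0 p0 /\
                        lin alpha' (fst (Nat.iter k step (q0, p0))) (snd (Nat.iter k step (q0, p0)))
                          = eps' ^ k * lin alpha' q0 p0).
  { induction k as [|k [IH IH']]; simpl; [split; ring|].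
    rewrite Hstep, Hstep', IH, IH'. split; ring. }
  assert (Ht0' : 0 < Rabs (lin alpha q0 p0)) by (apply Rabs_pos_lt; auto).
  destruct (pow_lt_1_zero eps Heps (r / Rabs (lin alpha q0 p0))) as [K HK].
  { apply Rdiv_lt_0_compat; lra. }
  specialize (HK K (le_n K)). destruct (Hiter K) as [HK1 HK2].
  assert (Heps0 : eps <> 0) by (intros ->; lra).
  exists (fst (Nat.iter K step (q0, p0))), (snd (Nat.iter K step (q0, p0))).
  unfold lin_norm. rewrite HK1, HK2. repeat split.
  - apply Rmult_integral_contrapositive. split; auto. apply pow_nonzero; auto.
  - rewrite Rabs_mult. apply Rmult_lt_reg_r with (/ Rabs (lin alpha q0 p0));
      [apply Rinv_0_lt_compat; lra|].
    rewrite Rmult_assoc, Rinv_r, Rmult_1_r by lra. exact HK.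
  - transitivity ((eps * eps') ^ K * (lin alpha q0 p0 * lin alpha' q0 p0));
      [rewrite Rpow_mult_distr; ring|].
    rewrite Hunit, pow1. ring.
Qed.

(** * Real quadratic [alpha] *)

Lemma unit_abs_lt_1 (e e' : R) : e * e' = 1 -> e <> e' -> Rabs e < 1 \/ Rabs e' < 1.
Proof.
  intros Hee' Hne.
  assert (Habs : Rabs e * Rabs e' = 1) by (rewrite <- Rabs_mult, Hee'; apply Rabs_R1).
  pose proof (Rabs_pos e). pose proof (Rabs_pos e').
  destruct (Rtotal_order (Rabs e) 1) as [H1|[H1|H1]]; [left; auto| |right; nra].
  exfalso. apply Hne. assert (H1' : Rabs e' = 1) by nra.
  revert H1 H1'. unfold Rabs. destruct (Rcase_abs e), (Rcase_abs e'); nra.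
Qed.

Section Quadratic.

Variables A B C D : Z.
Hypothesis HC : (0 < C)%Z.
Hypothesis HB : B <> 0%Z.

Definition quad (s : R) : R := (IZR A + IZR B * s) / IZR C.

Lemma IZR_C_neq0 : IZR C <> 0.
Proof. apply not_0_IZR. lia. Qed.

Lemma quad_sub_conj (s : R) : quad s - quad (- s) = 2 * IZR B * s / IZR C.
Proof. unfold quad. field. apply IZR_C_neq0. Qed.

Lemma quad_lin_norm (s : R) (q p : Z) : s * s = IZR D ->
  lin_norm (quad s) (quad (- s)) q p
  = IZR ((q * A - p * C) * (q * A - p * C) - q * q * B * B * D) / (IZR C * IZR C).
Proof.
  intros Hs. pose proof IZR_C_neq0. unfold lin_norm, lin, quad.
  rewrite minus_IZR, !mult_IZR, !minus_IZR, !mult_IZR, <- Hs. field. auto.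
Qed.

(* The lattice map induced by multiplication with [X + B C Y s]; the factor [B C] in the
   unit makes its matrix integral. *)
Definition unit_step (X Y : Z) (x : Z * Z) : Z * Z :=
  ((fst x * (X + A * C * Y) - snd x * C * C * Y)%Z,
   (fst x * (A * A - B * B * D) * Y + snd x * (X - A * C * Y))%Z).

Lemma lin_unit_step (X Y : Z) (s : R) (x : Z * Z) : s * s = IZR D ->
  lin (quad s) (fst (unit_step X Y x)) (snd (unit_step X Y x))
  = (IZR X + IZR (B * C * Y) * s) * lin (quad s) (fst x) (snd x).
Proof.
  intros Hs. pose proof IZR_C_neq0. unfold unit_step, lin, quad; cbn [fst snd].
  rewrite !minus_IZR, !plus_IZR, !mult_IZR, !plus_IZR, !minus_IZR, !mult_IZR, <- Hs.
  field. auto.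
Qed.

Hypothesis HD : (2 <= D)%Z.
Hypothesis Hsf : squarefree D.

Let s := sqrt (IZR D).

Lemma sqrt_D_sqr : s * s = IZR D.
Proof. apply sqrt_sqrt, IZR_le. lia. Qed.

Lemma sqrt_D_pos : 0 < s.
Proof. apply sqrt_lt_R0, IZR_lt. lia. Qed.

Lemma opp_sqrt_D_sqr : (- s) * (- s) = IZR D.
Proof. rewrite <- sqrt_D_sqr. ring. Qed.

Lemma quad_neq_conj : quad s <> quad (- s).
Proof.
  pose proof sqrt_D_pos. pose proof IZR_C_neq0.
  assert (IZR B <> 0) by (apply not_0_IZR; auto).
  intro E. apply Rminus_diag_eq in E. rewrite quad_sub_conj in E.
  unfold Rdiv in E. apply Rmult_integral in E as [E|E].
  - apply Rmult_integral in E as [E|E]; [|lra]. apply Rmult_integral in E as [E|E]; lra.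
  - apply (Rinv_neq_0_compat (IZR C)); auto.
Qed.

Lemma quad_lin_norm_neq0 (q p : Z) : q <> 0%Z -> lin_norm (quad s) (quad (- s)) q p <> 0.
Proof.
  intros Hq. rewrite (quad_lin_norm s q p sqrt_D_sqr). pose proof IZR_C_neq0.
  unfold Rdiv. apply Rmult_integral_contrapositive. split.
  - apply not_0_IZR. intro E.
    assert (HqB : (q * B = 0)%Z).
    { apply (squarefree_nonsquare D HD Hsf (q * A - p * C)%Z). lia. }
    lia.
  - apply Rinv_neq_0_compat. nra.
Qed.

Lemma small_unit : exists X Y : Z,
  (IZR X + IZR (B * C * Y) * s) * (IZR X + IZR (B * C * Y) * (- s)) = 1 /\
  Rabs (IZR X + IZR (B * C * Y) * s) < 1.
Proof.
  set (M := (D * (B * C) * (B * C))%Z).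
  assert (HBC : (B * C <> 0)%Z) by lia.
  assert (HM : (1 <= M)%Z) by (unfold M; nia).
  assert (HnsM : nonsquare M).
  { intros k L E. enough (B * C * L = 0)%Z by lia.
    apply (squarefree_nonsquare D HD Hsf k). rewrite E. unfold M. ring. }
  destruct (pell M HM HnsM) as [X [Y [HXY HY]]].
  assert (Hunit : forall Y', (Y' = Y \/ Y' = - Y)%Z ->
     (IZR X + IZR (B * C * Y') * s) * (IZR X + IZR (B * C * Y') * (- s)) = 1).
  { intros Y' HY'. apply (f_equal IZR) in HXY. unfold M in HXY.
    rewrite minus_IZR, !mult_IZR in HXY. rewrite <- HXY, <- sqrt_D_sqr.
    destruct HY' as [-> | ->]; rewrite !mult_IZR, ?opp_IZR; ring. }
  assert (Hne : IZR (B * C * Y) * s <> 0).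
  { pose proof sqrt_D_pos. apply Rmult_integral_contrapositive.
    split; [apply not_0_IZR; nia | lra]. }
  destruct (unit_abs_lt_1 (IZR X + IZR (B * C * Y) * s) (IZR X + IZR (B * C * Y) * (- s)))
    as [H1|H1].
  - apply Hunit. auto.
  - lra.
  - exists X, Y. split; auto.
  - exists X, (- Y)%Z. replace (IZR (B * C * - Y)) with (- IZR (B * C * Y))
      by (rewrite !mult_IZR, opp_IZR; ring).
    split.
    + replace (- IZR (B * C * Y)) with (IZR (B * C * - Y)) by (rewrite !mult_IZR, opp_IZR; ring).
      apply Hunit. auto.
    + replace (IZR X + - IZR (B * C * Y) * s) with (IZR X + IZR (B * C * Y) * - s) by ring.
      exact H1.
Qed.

Lemma A1_quad_iff (v : R) :
  A1 (quad s) v <->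
  exists q p, lin_norm (quad s) (quad (- s)) q p <> 0 /\
    (v = lin_norm (quad s) (quad (- s)) q p / (quad s - quad (- s)) \/
     v = - (lin_norm (quad s) (quad (- s)) q p / (quad s - quad (- s)))).
Proof.
  pose proof quad_neq_conj as Hne. pose proof IZR_C_neq0 as HCr.
  split.
  - intros HA.
    destruct (A1_norm_value (quad s) (quad (- s)) (/ (IZR C * IZR C)) v Hne) as [q [p [Hq Hv]]];
      auto.
    + apply Rinv_0_lt_compat. nra.
    + intros q p. eexists. rewrite (quad_lin_norm s q p sqrt_D_sqr). reflexivity.
    + exists q, p. split; [apply quad_lin_norm_neq0; auto|]. rewrite Hv.
      destruct (Z.lt_total q 0) as [H|[H|H]];
        [rewrite Z.sgn_neg; auto; left | contradiction | rewrite Z.sgn_pos; auto; right];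
        unfold Rdiv; ring.
  - intros [q0 [p0 [HN Hv]]].
    assert (Ht0 : lin (quad s) q0 p0 <> 0) by (intro E; apply HN; unfold lin_norm; rewrite E; ring).
    destruct small_unit as [X [Y [Hunit Hsmall]]].
    pose proof (small_lin_of_unit (quad s) (quad (- s)) _ _ (unit_step X Y) q0 p0
      (fun x => lin_unit_step X Y s x sqrt_D_sqr)
      (fun x => lin_unit_step X Y (- s) x opp_sqrt_D_sqr) Hunit Hsmall Ht0) as Hlin.
    destruct Hv as [-> | ->].
    + replace (lin_norm _ _ q0 p0 / _) with
        (- (IZR (-1) * lin_norm (quad s) (quad (- s)) q0 p0 / (quad s - quad (- s))))
        by (unfold Rdiv; ring).
      apply A1_of_small_lin; auto.
    + replace (- (lin_norm _ _ q0 p0 / _)) with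
        (- (IZR 1 * lin_norm (quad s) (quad (- s)) q0 p0 / (quad s - quad (- s))))
        by (unfold Rdiv; ring).
      apply A1_of_small_lin; auto.
Qed.

End Quadratic.

(** * The dual lattice *)

Lemma Ktrace_Kmul_lattice (D : Z) (s alpha : Kelt) (m n : Z) :
  (Ktrace (Kmul D s (Kadd (Kof_Z m) (Kscale_Z n alpha)))
   == inject_Z m * Ktrace s + inject_Z n * Ktrace (Kmul D s alpha))%Q.
Proof. unfold Ktrace, Kmul, Kadd, Kof_Z, Kscale_Z; simpl. ring. Qed.

Lemma in_dual_iff (D : Z) (alpha s : Kelt) :
  in_dual D alpha s <-> Q_is_int (Ktrace s) /\ Q_is_int (Ktrace (Kmul D s alpha)).
Proof.
  split.
  - intros Hs. split.
    + destruct (Hs (Kadd (Kof_Z 1) (Kscale_Z 0 alpha))) as [z Hz]; [exists 1%Z, 0%Z; auto|].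
      exists z. rewrite <- Hz, Ktrace_Kmul_lattice. simpl. ring.
    + destruct (Hs (Kadd (Kof_Z 0) (Kscale_Z 1 alpha))) as [z Hz]; [exists 0%Z, 1%Z; auto|].
      exists z. rewrite <- Hz, Ktrace_Kmul_lattice. simpl. ring.
  - intros [[z1 H1] [z2 H2]] y [m [n ->]]. exists (m * z1 + n * z2)%Z.
    rewrite Ktrace_Kmul_lattice, H1, H2, inject_Z_plus, !inject_Z_mult. reflexivity.
Qed.

Lemma Knorm_neq0 (D : Z) (s : Kelt) : (2 <= D)%Z -> squarefree D ->
  ~ Kzero s -> ~ (Knorm D s == 0)%Q.
Proof.
  intros HD Hsf Hs HN. apply Hs. destruct s as [[nx dx] [ny dy]].
  unfold Knorm, Kzero, Qeq in *; simpl in *.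
  rewrite !Pos2Z.inj_mul in HN.
  assert (Hy : (ny * Z.pos dx = 0)%Z).
  { apply (squarefree_nonsquare D HD Hsf (nx * Z.pos dy)%Z). nia. }
  assert (Hy0 : ny = 0%Z) by nia.
  subst ny. split; [|lia]. nia.
Qed.

Lemma Q2R_inject_Z (z : Z) : Q2R (inject_Z z) = IZR z.
Proof. unfold Q2R, inject_Z; simpl. field. Qed.

Lemma Q2R_neq0 (x : Q) : ~ (x == 0)%Q -> Q2R x <> 0.
Proof. intros Hx E. apply Hx, eqR_Qeq. rewrite E. unfold Q2R; simpl. ring. Qed.

Lemma dual_of_traces (a b : Q) (D : Z) (q p : Z) : ~ (b == 0)%Q -> D <> 0%Z ->
  exists s : Kelt, (Ktrace s == inject_Z q)%Q /\ (Ktrace (Kmul D s (a, b)) == inject_Z p)%Q.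
Proof.
  intros Hb HD.
  assert (HDQ : ~ (inject_Z D == 0)%Q) by (unfold Qeq; simpl; lia).
  exists (inject_Z q / 2, (inject_Z p - inject_Z q * a) / (2 * inject_Z D * b))%Q.
  unfold Ktrace, Kmul; simpl. split; field; auto.
Qed.

Definition Kreal_conj (D : Z) (u : Kelt) : R := Q2R (fst u) + Q2R (snd u) * - sqrt (IZR D).

Lemma Kreal_sub_conj_neq0 (a b : Q) (D : Z) : ~ (b == 0)%Q -> (0 < D)%Z ->
  Kreal D (a, b) - Kreal_conj D (a, b) <> 0.
Proof.
  intros Hb HD. unfold Kreal, Kreal_conj; cbn [fst snd].
  pose proof (Q2R_neq0 b Hb). assert (0 < sqrt (IZR D)) by (apply sqrt_lt_R0, IZR_lt; lia).
  intro E. apply H. nra.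
Qed.

(* With [q = Tr s] and [p = Tr (s alpha)] one has [q alpha - p = s' (alpha - alpha')]
   and [q alpha' - p = - s (alpha - alpha')], where [s'] is the conjugate of [s]. *)
Lemma lin_norm_traces (a b : Q) (D : Z) (s : Kelt) (q p : Z) :
  ~ (b == 0)%Q -> (0 < D)%Z ->
  Q2R (Ktrace s) = IZR q -> Q2R (Ktrace (Kmul D s (a, b))) = IZR p ->
  lin_norm (Kreal D (a, b)) (Kreal_conj D (a, b)) q p / (Kreal D (a, b) - Kreal_conj D (a, b))
  = - (2 * Q2R b * sqrt (IZR D) * Q2R (Knorm D s)).
Proof.
  intros Hb HD Hq Hp. pose proof (Kreal_sub_conj_neq0 a b D Hb HD) as Hd.
  assert (Hs : sqrt (IZR D) * sqrt (IZR D) = IZR D) by (apply sqrt_sqrt, IZR_le; lia).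
  destruct s as [x y]. unfold Kreal, Kreal_conj, Ktrace, Kmul, Knorm in *; cbn [fst snd] in *.
  rewrite Q2R_mult, Q2R_plus, !Q2R_mult, Q2R_inject_Z in Hp.
  rewrite Q2R_mult in Hq. rewrite Q2R_minus, !Q2R_mult, Q2R_inject_Z.
  replace (Q2R 2) with 2 in Hp, Hq by (unfold Q2R; simpl; field).
  unfold lin_norm, lin. rewrite <- Hq, <- Hp.
  set (sD := sqrt (IZR D)) in *. rewrite <- Hs.
  field. auto.
Qed.

Lemma norm_values_dual (a b : Q) (D : Z) (v : R) :
  ~ (b == 0)%Q -> (2 <= D)%Z -> squarefree D ->
  (exists q p, lin_norm (Kreal D (a, b)) (Kreal_conj D (a, b)) q p <> 0 /\
     (v = lin_norm (Kreal D (a, b)) (Kreal_conj D (a, b)) q p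
          / (Kreal D (a, b) - Kreal_conj D (a, b)) \/
      v = - (lin_norm (Kreal D (a, b)) (Kreal_conj D (a, b)) q p
             / (Kreal D (a, b) - Kreal_conj D (a, b))))) <->
  (exists s : Kelt, in_dual D (a, b) s /\ ~ Kzero s /\
     (v = 2 * Q2R b * sqrt (IZR D) * Q2R (Knorm D s) \/
      v = - (2 * Q2R b * sqrt (IZR D) * Q2R (Knorm D s)))).
Proof.
  intros Hb HD Hsf. pose proof (Kreal_sub_conj_neq0 a b D Hb ltac:(lia)) as Hd.
  assert (Hdelta : 2 * Q2R b * sqrt (IZR D) <> 0).
  { unfold Kreal, Kreal_conj in Hd; cbn [fst snd] in Hd. intro E. apply Hd. lra. }
  split.
  - intros [q [p [HN Hv]]].
    destruct (dual_of_traces a b D q p Hb ltac:(lia)) as [s [Hq Hp]].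
    apply Qeq_eqR in Hq, Hp. rewrite Q2R_inject_Z in Hq, Hp.
    pose proof (lin_norm_traces a b D s q p Hb ltac:(lia) Hq Hp) as Hid.
    exists s. split; [|split].
    + apply in_dual_iff. split; [exists q | exists p]; apply eqR_Qeq; rewrite Q2R_inject_Z; auto.
    + intros Hz. apply HN.
      assert (HK : Q2R (Knorm D s) = 0).
      { replace 0 with (Q2R 0) by (unfold Q2R; simpl; ring). apply Qeq_eqR.
        destruct s as [x y], Hz as [Hx Hy]. unfold Knorm; cbn [fst snd] in *.
        rewrite Hx, Hy. ring. }
      rewrite HK, Rmult_0_r, Ropp_0 in Hid.
      apply (Rmult_eq_reg_r (/ (Kreal D (a, b) - Kreal_conj D (a, b))));
        [|apply Rinv_neq_0_compat; auto].
      rewrite Rmult_0_l. exact Hid.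
    + rewrite Hid in Hv. lra.
  - intros [s [Hs [Hnz Hv]]].
    apply in_dual_iff in Hs as [[q Hq] [p Hp]].
    apply Qeq_eqR in Hq, Hp. rewrite Q2R_inject_Z in Hq, Hp.
    pose proof (lin_norm_traces a b D s q p Hb ltac:(lia) Hq Hp) as Hid.
    exists q, p. split.
    + intro E. rewrite E in Hid. unfold Rdiv in Hid. rewrite Rmult_0_l in Hid.
      apply (Knorm_neq0 D s HD Hsf Hnz), eqR_Qeq. unfold Q2R at 2; simpl. nra.
    + rewrite Hid. lra.
Qed.

Lemma Q2R_affine_quad (a b : Q) (s : R) :
  Q2R a + Q2R b * s
  = quad (Qnum a * Z.pos (Qden b)) (Qnum b * Z.pos (Qden a)) (Z.pos (Qden a * Qden b)) s.
Proof.
  unfold quad, Q2R. rewrite Pos2Z.inj_mul, !mult_IZR.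
  pose proof (IZR_nz (Qden a)). pose proof (IZR_nz (Qden b)). field. auto.
Qed.

Theorem theorem4 (a b : Q) (D : Z) :
  ~ (b == 0)%Q -> (2 <= D)%Z -> squarefree D ->
  forall v : R,
    A1 (Kreal D (a, b)) v <->
    exists s : Kelt, in_dual D (a, b) s /\ ~ Kzero s /\
      (v = 2 * Q2R b * sqrt (IZR D) * Q2R (Knorm D s) \/
       v = - (2 * Q2R b * sqrt (IZR D) * Q2R (Knorm D s))).
Proof.
  intros Hb HD Hsf v.
  rewrite <- norm_values_dual by auto.
  unfold Kreal_conj, Kreal; cbn [fst snd]. rewrite !Q2R_affine_quad.
  apply A1_quad_iff; auto.
  - lia.
  - intro E. apply Z.eq_mul_0 in E as [E|E]; [|lia].
    apply Hb. unfold Qeq; simpl. rewrite E. reflexivity.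
Qed.
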